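(* Let $n\ge 1$. For each $1\le j\le n$, let $N^{(j)}$ be the smallest $k\ge 1$ such that $w_j$ and $w_{k+j}$ belong to the same class. Then $$\hat H_3=\frac1n\sum_{j=1}^n h_{N^{(j)}-1}$$ is an unbiased estimator of the Shannon entropy, i.e. $E(\hat H_3)=-\sum_{i=1}^M p_i\log(p_i)$.
   Context: Let $w_1,w_2,\dots$ be an infinite sequence of independent, identically distributed samples. Each sample belongs to exactly one of $M$ classes $C_1,\dots,C_M$, and $\Pr(w_k\in C_i)=p_i$, where $0<p_i\le 1$ and $\sum_{i=1}^M p_i=1$. The logarithm is the natural logarithm. The harmonic numbers are $h_n=\sum_{k=1}^n 1/k$ for $n\ge 1$, with $h_0=0$. *)

From Stdlib Require Import Reals Lra Lia List Arith.
Import ListNotations.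
Open Scope R_scope.

(* Classes C_1..C_M are encoded as 0..M-1; p i is the probability of class i. *)

Fixpoint harmonic (n : nat) : R :=
  match n with
  | O => 0
  | S m => harmonic m + / INR (S m)
  end.

Definition sumR (l : list R) : R := fold_right Rplus 0 l.

Definition entropy (M : nat) (p : nat -> R) : R :=
  - sumR (map (fun i => p i * ln (p i)) (seq 0 M)).

Fixpoint words (M K : nat) : list (list nat) :=
  match K with
  | O => [[]]
  | S K' => flat_map (fun w => map (fun c => w ++ [c]) (seq 0 M)) (words M K')
  end.

Definition word_prob (p : nat -> R) (w : list nat) : R :=
  fold_right (fun c acc => p c * acc) 1 w.

(* N^(j) computed from a finite prefix w = (w_1,...,w_K) (1-based j):
   the smallest k >= 1 with w_{j+k} = w_j, if it is visible in the prefix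
   (i.e. j + k <= K); None if not determined by the prefix. *)
Definition N_prefix (w : list nat) (j : nat) : option nat :=
  let c := nth (j - 1) w 0%nat in
  find (fun k => Nat.eqb (nth (j - 1 + k) w 0%nat) c) (seq 1 (length w - j)).

Fixpoint Ns_prefix (w : list nat) (n : nat) : option (list nat) :=
  match n with
  | O => Some []
  | S m => match Ns_prefix w m, N_prefix w (S m) with
           | Some l, Some k => Some (l ++ [k])
           | _, _ => None
           end
  end.

(* \hat H_3 = (1/n) sum_{j=1}^n h_{N^(j) - 1}, as a function of a prefix,
   truncated to 0 on the event that some N^(j) is not determined by it *)
Definition H3_trunc (n : nat) (w : list nat) : R :=
  match Ns_prefix w n with
  | Some l => / INR n * sumR (map (fun k => harmonic (k - 1)) l)
  | None => 0
  end.

(* E[\hat H_3 * 1{all N^(j) <= K - j}] : a finite sum over the first K samples *)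
Definition E_H3_trunc (M : nat) (p : nat -> R) (n K : nat) : R :=
  sumR (map (fun w => word_prob p w * H3_trunc n w) (words M K)).

(* For a single position j the law of N^(j) is a mixture of geometric laws:
   given w_j in class c, N^(j) - 1 is geometric with parameter p_c.  Summing by
   parts, E h_(G-1) = sum_i p q^i h_i = sum_(k >= 1) q^k / k = -ln p for G geometric
   with parameter p and q = 1 - p, so E h_(N^(j)-1) = -sum_c p_c ln p_c for every j
   and the average over j is unbiased.  The expectation over the first K samples
   of the truncated estimator is sandwiched between the expectation of
   (1/n) sum_j h_(N^(j)-1) 1{N^(j) seen} and that quantity minus
   h_K sum_j P(N^(j) not seen); the latter probability decays geometrically
   while h_K grows only linearly, so both bounds tend to the entropy. *)

From Stdlib Require Import Reals List Lra Lia.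
From Coquelicot Require Import Coquelicot.
Import ListNotations.
Open Scope R_scope.

Lemma sumR_app l1 l2 : sumR (l1 ++ l2) = sumR l1 + sumR l2.
Proof. induction l1 as [|x l IH]; simpl; [ring | rewrite IH; ring]. Qed.

Lemma sumR_map_plus {A} (f g : A -> R) l :
  sumR (map (fun x => f x + g x) l) = sumR (map f l) + sumR (map g l).
Proof. induction l as [|x l IH]; simpl; [ring | rewrite IH; ring]. Qed.

Lemma sumR_map_scal {A} (a : R) (f : A -> R) l :
  sumR (map (fun x => a * f x) l) = a * sumR (map f l).
Proof. induction l as [|x l IH]; simpl; [ring | rewrite IH; ring]. Qed.

Lemma sumR_map_opp {A} (f : A -> R) l :
  sumR (map (fun x => - f x) l) = - sumR (map f l).
Proof. induction l as [|x l IH]; simpl; [ring | rewrite IH; ring]. Qed.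

Lemma sumR_map_ext_in {A} (f g : A -> R) l :
  (forall x, In x l -> f x = g x) -> sumR (map f l) = sumR (map g l).
Proof. intros H. f_equal. apply map_ext_in. exact H. Qed.

Lemma sumR_map_le {A} (f g : A -> R) l :
  (forall x, In x l -> f x <= g x) -> sumR (map f l) <= sumR (map g l).
Proof.
  induction l as [|x l IH]; simpl; intros H; [lra|].
  pose proof (H x (or_introl eq_refl)).
  pose proof (IH (fun y Hy => H y (or_intror Hy))). lra.
Qed.

Lemma sumR_map_const {A} (c : R) (l : list A) :
  sumR (map (fun _ => c) l) = INR (length l) * c.
Proof.
  induction l as [|x l IH]; [simpl; ring|].
  simpl length. rewrite S_INR. simpl. rewrite IH. ring.
Qed.

Lemma sumR_map_nonneg {A} (f : A -> R) l :
  (forall x, 0 <= f x) -> 0 <= sumR (map f l).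
Proof.
  intros H. rewrite <- (Rmult_0_r (INR (length l))), <- sumR_map_const.
  apply sumR_map_le. intros x _. apply H.
Qed.

Lemma sumR_flat_map {A B} (f : B -> R) (g : A -> list B) l :
  sumR (map f (flat_map g l)) = sumR (map (fun x => sumR (map f (g x))) l).
Proof.
  induction l as [|x l IH]; simpl; [reflexivity|].
  rewrite map_app, sumR_app, IH. reflexivity.
Qed.

Lemma sumR_map_indicator (c : nat) (f : nat -> R) (l : list nat) :
  NoDup l -> In c l -> sumR (map (fun d => if Nat.eqb d c then f d else 0) l) = f c.
Proof.
  induction l as [|x l IH]; intros Hnd Hin; [destruct Hin|].
  inversion Hnd as [|? ? Hx Hl]; subst. simpl.
  destruct (Nat.eqb_spec x c) as [<-|Hxc].
  - rewrite (sumR_map_ext_in _ (fun _ => 0)), sumR_map_const; [ring|].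
    intros y Hy. destruct (Nat.eqb_spec y x); [subst; contradiction | reflexivity].
  - destruct Hin as [Hin|Hin]; [congruence|]. rewrite IH by assumption. ring.
Qed.

Lemma is_lim_seq_sumR {A} (l : list A) (u : A -> nat -> R) (lim : A -> R) :
  (forall x, In x l -> is_lim_seq (u x) (lim x)) ->
  is_lim_seq (fun L => sumR (map (fun x => u x L) l)) (sumR (map lim l)).
Proof.
  induction l as [|a l IH]; intros H; simpl.
  - apply is_lim_seq_const.
  - apply is_lim_seq_plus'; [apply H; simpl; auto|].
    apply IH. intros x Hx. apply H. simpl; auto.
Qed.

(** * Harmonic numbers and the logarithmic series *)

Lemma harmonic_S n : harmonic (S n) = harmonic n + / INR (S n).
Proof. reflexivity. Qed.

Lemma harmonic_nonneg L : 0 <= harmonic L.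
Proof.
  induction L as [|L IH]; [simpl; lra|]. rewrite harmonic_S.
  pose proof (Rinv_0_lt_compat _ (lt_0_INR (S L) (Nat.lt_0_succ L))). lra.
Qed.

Lemma harmonic_le_compat a b : (a <= b)%nat -> harmonic a <= harmonic b.
Proof.
  induction 1 as [|m _ IH]; [lra|]. rewrite harmonic_S.
  pose proof (Rinv_0_lt_compat _ (lt_0_INR (S m) (Nat.lt_0_succ m))). lra.
Qed.

Lemma harmonic_le_INR L : harmonic L <= INR L.
Proof.
  induction L as [|L IH]; [simpl; lra|]. rewrite harmonic_S.
  assert (/ INR (S L) <= 1).
  { rewrite <- Rinv_1. apply Rinv_le_contravar; [lra|].
    rewrite S_INR. pose proof (pos_INR L). lra. }
  pose proof (S_INR L). lra.
Qed.

(* the N-th Taylor polynomial of [- ln (1 - x)] at 0 *)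
Fixpoint ln_taylor (N : nat) (x : R) : R :=
  match N with
  | O => 0
  | S N' => ln_taylor N' x + x ^ S N' / INR (S N')
  end.

Lemma ln_taylor_S N x : ln_taylor (S N) x = ln_taylor N x + x ^ S N / INR (S N).
Proof. reflexivity. Qed.

Lemma ln_taylor_0 N : ln_taylor N 0 = 0.
Proof.
  induction N as [|N IH]; [reflexivity|]. rewrite ln_taylor_S.
  rewrite IH, pow_i by lia. unfold Rdiv. ring.
Qed.

Lemma is_derive_ln_taylor N x :
  x <> 1 -> is_derive (ln_taylor N) x ((1 - x ^ N) / (1 - x)).
Proof.
  intros Hx. assert (1 - x <> 0) by lra.
  induction N as [|N IH].
  - replace ((1 - x ^ 0) / (1 - x)) with 0 by (simpl; field; assumption).
    apply (is_derive_const 0).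
  - replace ((1 - x ^ S N) / (1 - x)) with ((1 - x ^ N) / (1 - x) + x ^ N)
      by (simpl; field; assumption).
    apply (is_derive_plus (ln_taylor N) (fun y => y ^ S N / INR (S N))); [exact IH|].
    auto_derive; [exact I|].
    change (match N with 0%nat => 1 | S _ => INR N + 1 end) with (INR (S N)).
    field. apply not_0_INR. lia.
Qed.

Lemma ln_taylor_error N q : 0 <= q < 1 ->
  0 <= - ln (1 - q) - ln_taylor N q <= q ^ N / (1 - q) * q.
Proof.
  intros Hq.
  set (f := fun y => - ln (1 - y) - ln_taylor N y).
  assert (Hf : forall y, y < 1 -> is_derive f y (y ^ N / (1 - y))).
  { intros y Hy.
    replace (y ^ N / (1 - y)) with (/ (1 - y) - (1 - y ^ N) / (1 - y)) by (field; lra).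
    apply (is_derive_minus (fun y => - ln (1 - y)) (ln_taylor N));
      [| apply is_derive_ln_taylor; lra].
    auto_derive; [lra|]. field. lra. }
  destruct (MVT_gen f 0 q (fun y => y ^ N / (1 - y))) as [c [Hc Heq]].
  - intros y Hy. apply Hf. rewrite Rmax_right in Hy; lra.
  - intros y Hy. rewrite Rmax_right in Hy by lra. apply continuity_pt_filterlim.
    apply (ex_derive_continuous f). eexists. apply Hf. lra.
  - rewrite Rmin_left, Rmax_right in Hc by lra.
    unfold f in Heq. rewrite ln_taylor_0, !Rminus_0_r, ln_1 in Heq.
    assert (0 <= c ^ N <= q ^ N) by (split; [apply pow_le | apply pow_incr]; lra).
    assert (0 < / (1 - c) <= / (1 - q))
      by (split; [apply Rinv_0_lt_compat | apply Rinv_le_contravar]; lra).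
    assert (0 <= c ^ N / (1 - c) <= q ^ N / (1 - q))
      by (unfold Rdiv; split; [apply Rmult_le_pos | apply Rmult_le_compat]; lra).
    replace (- ln (1 - q) - ln_taylor N q) with (c ^ N / (1 - c) * q) by lra.
    split; [apply Rmult_le_pos | apply Rmult_le_compat_r]; lra.
Qed.

Lemma is_lim_seq_ln_taylor q : 0 <= q < 1 ->
  is_lim_seq (fun N => ln_taylor N q) (- ln (1 - q)).
Proof.
  intros Hq.
  apply (is_lim_seq_le_le (fun N => - ln (1 - q) - q ^ N / (1 - q) * q) _
           (fun _ => - ln (1 - q))).
  - intros N. pose proof (ln_taylor_error N q Hq). lra.
  - replace (Finite (- ln (1 - q))) with (Finite (- ln (1 - q) - 0 / (1 - q) * q))
      by (f_equal; field; lra).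
    apply is_lim_seq_minus'; [apply is_lim_seq_const|].
    apply is_lim_seq_mult'; [|apply is_lim_seq_const].
    apply is_lim_seq_mult'; [|apply is_lim_seq_const].
    apply is_lim_seq_geom. rewrite Rabs_pos_eq; lra.
  - apply is_lim_seq_const.
Qed.

Lemma is_lim_seq_INR_mult_pow q : 0 <= q < 1 -> is_lim_seq (fun N => INR N * q ^ N) 0.
Proof.
  intros Hq. destruct (Req_dec q 0) as [->|Hq0].
  - apply is_lim_seq_incr_1, (is_lim_seq_ext (fun _ => 0)); [intros N; simpl; ring|].
    apply is_lim_seq_const.
  - set (a := fun N => INR (S N) * q ^ N).
    assert (Ha : is_lim_seq a 0).
    { apply ex_series_lim_0, ex_series_Rabs, (ex_series_DAlembert a q); [lra| |].
      - intros N. unfold a. apply Rmult_integral_contrapositive.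
        split; [apply not_0_INR; lia | apply pow_nonzero; lra].
      - apply (is_lim_seq_ext (fun N => q * (1 + / INR (S N)))).
        + intros N. unfold a. rewrite Rabs_pos_eq.
          * rewrite (S_INR (S N)). simpl pow. field.
            split; [apply pow_nonzero; lra | apply not_0_INR; lia].
          * unfold Rdiv. apply Rmult_le_pos.
            -- apply Rmult_le_pos; [apply pos_INR | apply pow_le; lra].
            -- left. apply Rinv_0_lt_compat, Rmult_lt_0_compat;
                 [apply lt_0_INR; lia | apply pow_lt; lra].
        + replace (Finite q) with (Finite (q * (1 + 0))) by (f_equal; ring).
          apply is_lim_seq_mult'; [apply is_lim_seq_const|].
          apply is_lim_seq_plus'; [apply is_lim_seq_const|].
          apply (is_lim_seq_incr_1 (fun N => / INR N)).
          replace (Finite 0) with (Rbar_inv p_infty) by reflexivity.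
          apply is_lim_seq_inv; [apply is_lim_seq_INR | discriminate]. }
    apply (is_lim_seq_le_le (fun _ => 0) _ a); [| apply is_lim_seq_const | exact Ha].
    intros N. unfold a. pose proof (pow_le q N ltac:(lra)). pose proof (pos_INR N).
    rewrite S_INR. split; [apply Rmult_le_pos | apply Rmult_le_compat_r]; lra.
Qed.

Lemma is_lim_seq_harmonic_mult_pow q d : 0 <= q < 1 ->
  is_lim_seq (fun N => harmonic (N + d) * q ^ N) 0.
Proof.
  intros Hq.
  apply (is_lim_seq_le_le (fun _ => 0) _ (fun N => INR N * q ^ N + INR d * q ^ N)).
  - intros N. pose proof (pow_le q N ltac:(lra)). pose proof (harmonic_nonneg (N + d)).
    pose proof (harmonic_le_INR (N + d)). rewrite plus_INR in *.
    split; [apply Rmult_le_pos | rewrite <- Rmult_plus_distr_r; apply Rmult_le_compat_r]; lra.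
  - apply is_lim_seq_const.
  - replace (Finite 0) with (Finite (0 + INR d * 0)) by (f_equal; ring).
    apply is_lim_seq_plus'; [apply is_lim_seq_INR_mult_pow; assumption|].
    apply is_lim_seq_mult'; [apply is_lim_seq_const|].
    apply is_lim_seq_geom. rewrite Rabs_pos_eq; lra.
Qed.

Lemma sumR_geom_harmonic pc L :
  sumR (map (fun i => pc * (1 - pc) ^ i * harmonic i) (seq 0 L)) =
  ln_taylor L (1 - pc) - (1 - pc) ^ L * harmonic L.
Proof.
  induction L as [|L IH]; [simpl; ring|].
  rewrite seq_S, map_app, sumR_app, IH, ln_taylor_S, harmonic_S.
  assert (Hs : INR (S L) <> 0) by (apply not_0_INR; lia).
  set (s := INR (S L)) in *. simpl. field. exact Hs.
Qed.

Lemma is_lim_seq_sumR_geom_harmonic pc : 0 < pc <= 1 ->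
  is_lim_seq (fun L => sumR (map (fun i => pc * (1 - pc) ^ i * harmonic i) (seq 0 L)))
    (- ln pc).
Proof.
  intros Hp. assert (Hq : 0 <= 1 - pc < 1) by lra.
  apply (is_lim_seq_ext (fun L => ln_taylor L (1 - pc) - harmonic (L + 0) * (1 - pc) ^ L)).
  { intros L. rewrite sumR_geom_harmonic, Nat.add_0_r. ring. }
  replace (Finite (- ln pc)) with (Finite (- ln (1 - (1 - pc)) - 0))
    by (f_equal; ring_simplify (1 - (1 - pc)); ring).
  apply is_lim_seq_minus';
    [apply is_lim_seq_ln_taylor | apply is_lim_seq_harmonic_mult_pow]; assumption.
Qed.

(** * Return times *)

Definition first_index (c : nat) (v : list nat) : option nat :=
  find (fun k => Nat.eqb (nth k v 0%nat) c) (seq 0 (length v)).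

Lemma find_map {A B} (f : B -> bool) (g : A -> B) l :
  find f (map g l) = option_map g (find (fun x => f (g x)) l).
Proof. induction l as [|x l IH]; simpl; [reflexivity|]. destruct (f (g x)); auto. Qed.

Lemma find_ext {A} (f g : A -> bool) l : (forall x, f x = g x) -> find f l = find g l.
Proof. intros H. induction l as [|x l IH]; simpl; [reflexivity|]. rewrite H, IH. reflexivity. Qed.

Lemma find_nth_cons d v c :
  find (fun k => Nat.eqb (nth k (d :: v) 0%nat) c) (seq 1 (length v)) =
  option_map S (first_index c v).
Proof. rewrite <- seq_shift, find_map. reflexivity. Qed.

Lemma first_index_cons c d v :
  first_index c (d :: v) = if Nat.eqb d c then Some 0%nat else option_map S (first_index c v).
Proof.
  unfold first_index at 1. simpl. destruct (Nat.eqb d c); [reflexivity|].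
  apply find_nth_cons.
Qed.

Lemma N_prefix_1 c v : N_prefix (c :: v) 1 = option_map S (first_index c v).
Proof. unfold N_prefix. simpl. rewrite Nat.sub_0_r. apply (find_nth_cons c). Qed.

Lemma N_prefix_app u v j : (1 <= j)%nat -> length u = (j - 1)%nat ->
  N_prefix (u ++ v) j = N_prefix v 1.
Proof.
  intros Hj Hu. unfold N_prefix.
  rewrite app_nth2, Hu, Nat.sub_diag, length_app by lia.
  replace (length u + length v - j)%nat with (length v - 1)%nat by lia.
  apply find_ext. intros k. rewrite app_nth2 by lia. rewrite Hu.
  replace (j - 1 + k - (j - 1))%nat with (1 - 1 + k)%nat by lia. reflexivity.
Qed.

(** * The truncated estimator, pointwise *)

Definition harmonic_opt (o : option nat) : R :=
  match o with Some k => harmonic (k - 1) | None => 0 end.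

Definition indicator_None (o : option nat) : R :=
  match o with Some _ => 0 | None => 1 end.

Lemma harmonic_opt_N_prefix w j : 0 <= harmonic_opt (N_prefix w j) <= harmonic (length w).
Proof.
  unfold harmonic_opt, N_prefix. destruct (find _ _) as [k|] eqn:E.
  - apply find_some in E as [E _]. apply in_seq in E.
    split; [apply harmonic_nonneg | apply harmonic_le_compat; lia].
  - split; [lra | apply harmonic_nonneg].
Qed.

Lemma Ns_prefix_Some w n l : Ns_prefix w n = Some l ->
  sumR (map (fun k => harmonic (k - 1)) l) =
  sumR (map (fun j => harmonic_opt (N_prefix w j)) (seq 1 n)).
Proof.
  revert l. induction n as [|n IH]; intros l H; simpl in H.
  - injection H as <-. reflexivity.
  - destruct (Ns_prefix w n) as [l'|]; [|discriminate].
    destruct (N_prefix w (S n)) as [k|] eqn:Ek; [|discriminate].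
    injection H as <-. rewrite seq_S, !map_app, !sumR_app, (IH l' eq_refl).
    simpl. rewrite Ek. reflexivity.
Qed.

Lemma Ns_prefix_None w n : Ns_prefix w n = None ->
  1 <= sumR (map (fun j => indicator_None (N_prefix w j)) (seq 1 n)).
Proof.
  induction n as [|n IH]; intros H; simpl in H; [discriminate|].
  rewrite seq_S, map_app, sumR_app. simpl.
  assert (Hnn : forall o, 0 <= indicator_None o) by (intros [|]; simpl; lra).
  pose proof (sumR_map_nonneg (fun j => indicator_None (N_prefix w j)) (seq 1 n)
                (fun j => Hnn _)).
  pose proof (Hnn (N_prefix w (S n))).
  destruct (Ns_prefix w n) as [l'|].
  - destruct (N_prefix w (S n)); [discriminate|]. simpl. lra.
  - specialize (IH eq_refl). lra.
Qed.

Lemma H3_trunc_bounds n w : (1 <= n)%nat ->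
  / INR n * sumR (map (fun j => harmonic_opt (N_prefix w j)) (seq 1 n))
    - harmonic (length w) * sumR (map (fun j => indicator_None (N_prefix w j)) (seq 1 n))
  <= H3_trunc n w <=
  / INR n * sumR (map (fun j => harmonic_opt (N_prefix w j)) (seq 1 n)).
Proof.
  intros Hn.
  set (SG := sumR (map (fun j => harmonic_opt (N_prefix w j)) (seq 1 n))).
  set (SU := sumR (map (fun j => indicator_None (N_prefix w j)) (seq 1 n))).
  assert (Hinv : 0 < / INR n) by (apply Rinv_0_lt_compat, lt_0_INR; lia).
  assert (HSG : 0 <= SG <= INR n * harmonic (length w)).
  { split.
    - apply sumR_map_nonneg. intros j. apply harmonic_opt_N_prefix.
    - rewrite <- (length_seq n 1), <- sumR_map_const. apply sumR_map_le.
      intros j _. apply harmonic_opt_N_prefix. }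
  assert (HSU : 0 <= SU)
    by (apply sumR_map_nonneg; intros j; destruct (N_prefix w j); simpl; lra).
  pose proof (harmonic_nonneg (length w)) as Hh.
  unfold H3_trunc. destruct (Ns_prefix w n) as [l|] eqn:E.
  - rewrite (Ns_prefix_Some w n l E). fold SG.
    pose proof (Rmult_le_pos _ _ Hh HSU). lra.
  - pose proof (Ns_prefix_None w n E) as HSU1. fold SU in HSU1.
    (* on this event the lower bound is at most (1/n) SG - h_K <= 0 *)
    assert (/ INR n * SG <= harmonic (length w)).
    { apply (Rmult_le_reg_l (INR n)); [apply lt_0_INR; lia|].
      rewrite <- Rmult_assoc, Rinv_r by (apply not_0_INR; lia). lra. }
    assert (harmonic (length w) * 1 <= harmonic (length w) * SU)
      by (apply Rmult_le_compat_l; lra).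
    split; [lra|]. apply Rmult_le_pos; lra.
Qed.

(** * Expectations over the first K samples *)

Section Sampling.

Variables (M : nat) (p : nat -> R).
Hypothesis p_range : forall i, (i < M)%nat -> 0 < p i <= 1.
Hypothesis p_sum : sumR (map p (seq 0 M)) = 1.

Definition expect (K : nat) (f : list nat -> R) : R :=
  sumR (map (fun w => word_prob p w * f w) (words M K)).

Lemma word_prob_fold_right w a :
  fold_right (fun c acc => p c * acc) a w = word_prob p w * a.
Proof.
  induction w as [|c w IH]; simpl; [ring|].
  unfold word_prob in *. simpl. rewrite IH. ring.
Qed.

Lemma expect_0 f : expect 0 f = f [].
Proof. unfold expect, word_prob. simpl. ring. Qed.

Lemma expect_S_last K f :
  expect (S K) f = expect K (fun w => sumR (map (fun c => p c * f (w ++ [c])) (seq 0 M))).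
Proof.
  unfold expect. simpl. rewrite sumR_flat_map. f_equal. apply map_ext. intros w.
  rewrite map_map, <- sumR_map_scal. f_equal. apply map_ext. intros c.
  unfold word_prob at 1. rewrite fold_right_app, word_prob_fold_right. simpl. ring.
Qed.

Lemma expect_S K f :
  expect (S K) f = sumR (map (fun c => p c * expect K (fun v => f (c :: v))) (seq 0 M)).
Proof.
  revert f. induction K as [|K IH]; intros f.
  - rewrite expect_S_last, expect_0. f_equal. apply map_ext. intros c.
    rewrite expect_0. reflexivity.
  - rewrite expect_S_last, IH. f_equal. apply map_ext. intros c.
    rewrite expect_S_last. reflexivity.
Qed.

Lemma expect_ext_length K f g :
  (forall w, length w = K -> f w = g w) -> expect K f = expect K g.
Proof.
  revert f g. induction K as [|K IH]; intros f g H.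
  - rewrite !expect_0. apply H. reflexivity.
  - rewrite !expect_S. f_equal. apply map_ext. intros c. f_equal.
    apply IH. intros w Hw. apply H. simpl. lia.
Qed.

Lemma expect_ext K f g : (forall w, f w = g w) -> expect K f = expect K g.
Proof. intros H. apply expect_ext_length. intros w _. apply H. Qed.

Lemma expect_plus K f g : expect K (fun w => f w + g w) = expect K f + expect K g.
Proof. unfold expect. rewrite <- sumR_map_plus. f_equal. apply map_ext. intros; ring. Qed.

Lemma expect_minus K f g : expect K (fun w => f w - g w) = expect K f - expect K g.
Proof.
  unfold expect, Rminus at 2. rewrite <- sumR_map_opp, <- sumR_map_plus.
  f_equal. apply map_ext. intros; ring.
Qed.

Lemma expect_scal K a f : expect K (fun w => a * f w) = a * expect K f.
Proof. unfold expect. rewrite <- sumR_map_scal. f_equal. apply map_ext. intros; ring. Qed.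

Lemma expect_app a b f :
  expect (a + b) f = expect a (fun u => expect b (fun v => f (u ++ v))).
Proof.
  revert f. induction a as [|a IH]; intros f.
  - rewrite expect_0. reflexivity.
  - change (S a + b)%nat with (S (a + b)). rewrite !expect_S.
    f_equal. apply map_ext. intros c. rewrite IH. reflexivity.
Qed.

Lemma expect_le_length K f g :
  (forall w, length w = K -> f w <= g w) -> expect K f <= expect K g.
Proof.
  revert f g. induction K as [|K IH]; intros f g H.
  - rewrite !expect_0. apply H. reflexivity.
  - rewrite !expect_S. apply sumR_map_le. intros c Hc. apply in_seq in Hc.
    pose proof (p_range c ltac:(lia)).
    apply Rmult_le_compat_l; [lra|]. apply IH. intros w Hw. apply H. simpl. lia.
Qed.

Lemma sumR_map_p_weighted (x : R) :
  sumR (map (fun c => p c * x) (seq 0 M)) = x.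
Proof.
  rewrite (sumR_map_ext_in _ (fun c => x * p c)) by (intros; ring).
  rewrite sumR_map_scal, p_sum. ring.
Qed.

Lemma expect_const K a : expect K (fun _ => a) = a.
Proof.
  induction K as [|K IH].
  - apply expect_0.
  - rewrite expect_S, IH. apply sumR_map_p_weighted.
Qed.

Lemma expect_sumR {A} K (F : A -> list nat -> R) l :
  expect K (fun w => sumR (map (fun j => F j w) l)) = sumR (map (fun j => expect K (F j)) l).
Proof.
  induction l as [|j l IH]; simpl.
  - apply expect_const.
  - rewrite expect_plus, IH. reflexivity.
Qed.

Lemma sumR_map_p_split (c : nat) (X Y : R) (F : nat -> R) :
  (c < M)%nat -> (forall d, F d = if Nat.eqb d c then X else Y) ->
  sumR (map (fun d => p d * F d) (seq 0 M)) = p c * X + (1 - p c) * Y.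
Proof.
  intros Hc HF.
  rewrite (sumR_map_ext_in _ (fun d => p d * Y + (if Nat.eqb d c then p d * (X - Y) else 0))).
  - rewrite sumR_map_plus, sumR_map_p_weighted.
    rewrite (sumR_map_indicator c (fun d => p d * (X - Y))).
    + ring.
    + apply seq_NoDup.
    + apply in_seq. lia.
  - intros d _. rewrite HF. destruct (Nat.eqb d c); ring.
Qed.

Lemma expect_first_index (c : nat) (f : nat -> R) (z : R) L : (c < M)%nat ->
  expect L (fun v => match first_index c v with Some i => f i | None => z end) =
  sumR (map (fun i => p c * (1 - p c) ^ i * f i) (seq 0 L)) + (1 - p c) ^ L * z.
Proof.
  intros Hc. revert f. induction L as [|L IH]; intros f.
  - rewrite expect_0. simpl. ring.
  - rewrite expect_S.
    set (tail := sumR (map (fun i => p c * (1 - p c) ^ i * f (S i)) (seq 0 L))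
                 + (1 - p c) ^ L * z).
    rewrite (sumR_map_p_split c (f 0%nat) tail); [| assumption |].
    + rewrite <- cons_seq, <- seq_shift, map_cons, map_map. unfold tail. simpl.
      rewrite (sumR_map_ext_in (fun i => p c * ((1 - p c) * (1 - p c) ^ i) * f (S i))
                 (fun i => (1 - p c) * (p c * (1 - p c) ^ i * f (S i)))) by (intros; ring).
      rewrite sumR_map_scal. ring.
    + intros d. destruct (Nat.eqb_spec d c) as [->|Hdc].
      * rewrite <- (expect_const L (f 0%nat)). apply expect_ext. intros v.
        rewrite first_index_cons, Nat.eqb_refl. reflexivity.
      * unfold tail. rewrite <- IH. apply expect_ext. intros v.
        rewrite first_index_cons. apply Nat.eqb_neq in Hdc. rewrite Hdc.
        destruct (first_index c v); reflexivity.
Qed.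

(* N^(j) only looks at the samples from position j on, which are again i.i.d. *)
Lemma expect_N_prefix (phi : option nat -> R) j L : (1 <= j)%nat ->
  expect ((j - 1) + S L) (fun w => phi (N_prefix w j)) =
  sumR (map (fun c => p c * expect L (fun v => phi (option_map S (first_index c v)))) (seq 0 M)).
Proof.
  intros Hj. rewrite expect_app.
  rewrite (expect_ext_length _ _ (fun _ => expect (S L) (fun v => phi (N_prefix v 1)))).
  - rewrite expect_const, expect_S. f_equal. apply map_ext. intros c.
    f_equal. apply expect_ext. intros v. rewrite N_prefix_1. reflexivity.
  - intros u Hu. apply expect_ext. intros v. rewrite N_prefix_app; auto.
Qed.

Lemma expect_harmonic_opt_N_prefix j L : (1 <= j)%nat ->
  expect ((j - 1) + S L) (fun w => harmonic_opt (N_prefix w j)) =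
  sumR (map (fun c => p c * sumR (map (fun i => p c * (1 - p c) ^ i * harmonic i) (seq 0 L)))
         (seq 0 M)).
Proof.
  intros Hj. rewrite expect_N_prefix by assumption.
  apply sumR_map_ext_in. intros c Hc. apply in_seq in Hc. f_equal.
  rewrite <- (Rplus_0_r (sumR _)), <- (Rmult_0_r ((1 - p c) ^ L)).
  rewrite <- expect_first_index by lia. apply expect_ext. intros v.
  destruct (first_index c v); simpl; [rewrite Nat.sub_0_r|]; reflexivity.
Qed.

Lemma expect_indicator_None_N_prefix j L : (1 <= j)%nat ->
  expect ((j - 1) + S L) (fun w => indicator_None (N_prefix w j)) =
  sumR (map (fun c => p c * (1 - p c) ^ L) (seq 0 M)).
Proof.
  intros Hj. rewrite expect_N_prefix by assumption.
  apply sumR_map_ext_in. intros c Hc. apply in_seq in Hc. f_equal.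
  rewrite (expect_ext _ _ (fun v => match first_index c v with Some i => (fun _ => 0) i
                                                            | None => 1 end))
    by (intros v; destruct (first_index c v); reflexivity).
  rewrite expect_first_index by lia.
  rewrite (sumR_map_ext_in _ (fun _ => 0)), sumR_map_const by (intros; ring). ring.
Qed.

Lemma is_lim_seq_expect_harmonic_opt j : (1 <= j)%nat ->
  is_lim_seq (fun K => expect K (fun w => harmonic_opt (N_prefix w j))) (entropy M p).
Proof.
  intros Hj. apply (is_lim_seq_incr_n _ j).
  apply (is_lim_seq_ext (fun L =>
    sumR (map (fun c => p c * sumR (map (fun i => p c * (1 - p c) ^ i * harmonic i) (seq 0 L)))
           (seq 0 M)))).
  { intros L. rewrite <- (expect_harmonic_opt_N_prefix j L Hj). f_equal. lia. }
  unfold entropy. rewrite <- sumR_map_opp.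
  rewrite (sumR_map_ext_in _ (fun c => p c * - ln (p c))) by (intros; ring).
  apply is_lim_seq_sumR. intros c Hc. apply in_seq in Hc.
  apply is_lim_seq_mult'; [apply is_lim_seq_const|].
  apply is_lim_seq_sumR_geom_harmonic, p_range. lia.
Qed.

Lemma is_lim_seq_harmonic_expect_indicator_None j : (1 <= j)%nat ->
  is_lim_seq (fun K => harmonic K * expect K (fun w => indicator_None (N_prefix w j))) 0.
Proof.
  intros Hj. apply (is_lim_seq_incr_n _ j).
  apply (is_lim_seq_ext (fun L =>
    sumR (map (fun c => p c * (harmonic (L + j) * (1 - p c) ^ L)) (seq 0 M)))).
  { intros L. replace (L + j)%nat with ((j - 1) + S L)%nat at 2 by lia.
    rewrite expect_indicator_None_N_prefix, <- sumR_map_scal by assumption.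
    apply sumR_map_ext_in. intros; ring. }
  replace (Finite 0) with (Finite (sumR (map (fun c => p c * 0) (seq 0 M))))
    by (f_equal; apply sumR_map_p_weighted).
  apply is_lim_seq_sumR. intros c Hc. apply in_seq in Hc.
  apply is_lim_seq_mult'; [apply is_lim_seq_const|].
  apply is_lim_seq_harmonic_mult_pow.
  pose proof (p_range c ltac:(lia)). lra.
Qed.

Lemma expect_H3_trunc_bounds n K : (1 <= n)%nat ->
  / INR n * sumR (map (fun j => expect K (fun w => harmonic_opt (N_prefix w j))) (seq 1 n))
    - sumR (map (fun j => harmonic K * expect K (fun w => indicator_None (N_prefix w j)))
              (seq 1 n))
  <= expect K (H3_trunc n) <=
  / INR n * sumR (map (fun j => expect K (fun w => harmonic_opt (N_prefix w j))) (seq 1 n)).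
Proof.
  intros Hn.
  set (SG := fun w => sumR (map (fun j => harmonic_opt (N_prefix w j)) (seq 1 n))).
  set (SU := fun w => sumR (map (fun j => indicator_None (N_prefix w j)) (seq 1 n))).
  assert (Eupper : / INR n * sumR (map (fun j => expect K (fun w => harmonic_opt (N_prefix w j)))
                                    (seq 1 n)) = expect K (fun w => / INR n * SG w))
    by (rewrite expect_scal; unfold SG; rewrite expect_sumR; reflexivity).
  assert (Egap : sumR (map (fun j => harmonic K * expect K (fun w => indicator_None (N_prefix w j)))
                        (seq 1 n)) = expect K (fun w => harmonic K * SU w))
    by (rewrite expect_scal; unfold SU; rewrite expect_sumR, sumR_map_scal; reflexivity).
  rewrite Eupper, Egap, <- expect_minus.
  split; apply expect_le_length; intros w <-; apply H3_trunc_bounds; assumption.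
Qed.

Lemma is_lim_seq_mean_expect_harmonic_opt n : (1 <= n)%nat ->
  is_lim_seq (fun K => / INR n *
    sumR (map (fun j => expect K (fun w => harmonic_opt (N_prefix w j))) (seq 1 n)))
    (entropy M p).
Proof.
  intros Hn.
  replace (Finite (entropy M p))
    with (Finite (/ INR n * sumR (map (fun _ => entropy M p) (seq 1 n)))).
  - apply is_lim_seq_mult'; [apply is_lim_seq_const|].
    apply is_lim_seq_sumR. intros j Hj. apply in_seq in Hj.
    apply is_lim_seq_expect_harmonic_opt. lia.
  - f_equal. rewrite sumR_map_const, length_seq. field. apply not_0_INR. lia.
Qed.

Lemma is_lim_seq_sumR_harmonic_expect_indicator_None n :
  is_lim_seq (fun K =>
    sumR (map (fun j => harmonic K * expect K (fun w => indicator_None (N_prefix w j)))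
           (seq 1 n))) 0.
Proof.
  replace (Finite 0) with (Finite (sumR (map (fun _ => 0) (seq 1 n))))
    by (f_equal; rewrite sumR_map_const; ring).
  apply is_lim_seq_sumR. intros j Hj. apply in_seq in Hj.
  apply is_lim_seq_harmonic_expect_indicator_None. lia.
Qed.

End Sampling.

Theorem mainTheorem3 (M : nat) (p : nat -> R) (n : nat)
  (hM : (1 <= M)%nat)
  (hp : forall i, (i < M)%nat -> 0 < p i <= 1)
  (hsum : sumR (map p (seq 0 M)) = 1)
  (hn : (1 <= n)%nat) :
  Un_cv (fun K => E_H3_trunc M p n K) (entropy M p).
Proof.
  apply is_lim_seq_Reals.
  eapply is_lim_seq_le_le.
  - intros K. apply expect_H3_trunc_bounds; assumption.
  - rewrite <- (Rminus_0_r (entropy M p)).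
    apply is_lim_seq_minus';
      [ apply is_lim_seq_mean_expect_harmonic_opt
      | apply is_lim_seq_sumR_harmonic_expect_indicator_None ]; assumption.
  - apply is_lim_seq_mean_expect_harmonic_opt; assumption.
Qed.
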